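(* There is no polynomial $p(a,y,z)\in\mathbb{C}[a,y,z]$ such that for all $(y,z)\in\mathbb{C}^2$: $(y=0\wedge z=0)\iff(\exists a\in\mathbb{C})\,p(a,y,z)=0$. *)

(* The field of complex numbers C is modelled as
   [complex R] (mathcomp-real-closed) over Stdlib's real numbers R
   (which is a real-closed field via mathcomp-analysis' Rstruct). *)
From mathcomp Require Import all_boot all_algebra.
From mathcomp Require Import Rstruct complex.
From mathcomp Require Import mpoly.

Definition C : numClosedFieldType := (Rdefinitions.R)[i]%C.

Definition pt3 (a y z : C) : 'I_3 -> C :=
  fun i => nth 0%R [:: a; y; z] (nat_of_ord i).

(* For (y, z) <> (0, 0) the
   one-variable polynomial a |-> F(a, y, z) has no root, so over an
   algebraically closed field it is constant; comparing slices in z, which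
   agree away from z = 0 and hence also at z = 0, gives F(0, 0, 0) = 0. For
   y <> 0 the slice z |-> F(0, y, z) has no root either, so
   F(0, y, 1) = F(0, y, 0), and the same comparison at y = 0 gives
   F(0, 0, 1) = F(0, 0, 0) = 0, so (0, 1) would project from a zero. *)
From mathcomp Require Import all_boot all_algebra.
From mathcomp Require Import Rstruct complex.
From mathcomp Require Import mpoly.

Import GRing.Theory Num.Theory.
Local Open Scope ring_scope.

Definition poly_fun {R : nzRingType} (f : R -> R) :=
  exists q : {poly R}, forall x, q.[x] = f x.

Lemma poly_fun_const_of_noroot {R : closedFieldType} {f : R -> R} :
  poly_fun f -> (forall x, f x != 0) -> forall x, f x = f 0.
Proof.
move=> [q qf] f_neq0 x; rewrite -!qf.
have size_q : size q == 1%N.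
  apply: contraT => /closed_rootP [r /eqP qr0].
  by move: (f_neq0 r); rewrite -qf qr0 eqxx.
by rewrite (size1_polyC (eq_leq (eqP size_q))) !hornerC.
Qed.

Lemma poly_eq0_at0_of_punctured (R : numDomainType) (q : {poly R}) :
  (forall x, x != 0 -> q.[x] = 0) -> q.[0] = 0.
Proof.
move=> q_punct; apply/eqP; apply: contraT => q0_neq0.
have q_neq0 : q != 0 by apply: contra q0_neq0 => /eqP ->; rewrite horner0.
(* the points 1, ..., size q are more roots than q can have *)
have := @max_poly_roots _ q [seq (i%:R : R) | i <- iota 1 (size q)] q_neq0.
rewrite size_map size_iota ltnn; apply.
  apply/allP => x; case/mapP => i; rewrite mem_iota => /andP [i_gt0 _] ->.
  by rewrite /root q_punct // pnatr_eq0 -lt0n.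
by rewrite map_inj_uniq ?iota_uniq // => i j /eqP; rewrite eqr_nat => /eqP.
Qed.

Lemma poly_fun_eq_at0 {R : numDomainType} {f g : R -> R} :
  poly_fun f -> poly_fun g -> (forall x, x != 0 -> f x = g x) -> f 0 = g 0.
Proof.
move=> [p pf] [q qg] fg; apply/eqP; rewrite -subr_eq0 -pf -qg -hornerN -hornerD.
apply/eqP/poly_eq0_at0_of_punctured => x x_neq0.
by rewrite hornerD hornerN pf qg fg ?subrr.
Qed.

Lemma poly_fun_meval {R : comNzRingType} {n} (p : {mpoly R[n]}) (k : 'I_n)
    (v : 'I_n -> R) :
  poly_fun (fun x => p.@[fun i => if i == k then x else v i]).
Proof.
pose X i : {poly R} := if i == k then 'X else (v i)%:P.
exists (\sum_(m <- msupp p) p@_m *: \prod_(i < n) X i ^+ m i) => x.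
rewrite mevalE horner_sum; apply: eq_bigr => m _.
rewrite hornerZ horner_prod; congr (_ * _); apply: eq_bigr => i _.
by rewrite horner_exp /X; case: eqP; rewrite ?hornerX ?hornerC.
Qed.

Lemma poly_fun_meval_line {R : comNzRingType} {n} (p : {mpoly R[n]}) (k : 'I_n)
    (w : R -> 'I_n -> R) :
  (forall x i, w x i = if i == k then x else w 0 i) ->
  poly_fun (fun x => p.@[w x]).
Proof.
move=> w_line; have [q qp] := poly_fun_meval p k (w 0).
by exists q => x; rewrite qp; apply: meval_eq => i; rewrite [RHS]w_line.
Qed.

Section NoPolynomialProjection.

Variables (R : numClosedFieldType) (F : R -> R -> R -> R).
Hypothesis poly_a : forall y z, poly_fun (fun a => F a y z).
Hypothesis poly_y : forall a z, poly_fun (fun y => F a y z).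
Hypothesis poly_z : forall a y, poly_fun (fun z => F a y z).

Lemma origin_not_projection_of_poly_zeros :
  ~ (forall y z, (y = 0 /\ z = 0) <-> (exists a, F a y z = 0)).
Proof.
move=> zeroF.
have F_neq0 a y z : y != 0 \/ z != 0 -> F a y z != 0.
  move=> yz_neq0; apply/eqP => Fa0.
  have [y0 z0] : y = 0 /\ z = 0 by apply/zeroF; exists a.
  by case: yz_neq0; rewrite ?y0 ?z0 eqxx.
have [a0 Fa000] : exists a, F a 0 0 = 0 by apply/zeroF.
have F000 : F 0 0 0 = 0.
  rewrite -[RHS]Fa000.
  apply: (poly_fun_eq_at0 (poly_z 0 0) (poly_z a0 0)) => z z_neq0.
  rewrite [RHS](poly_fun_const_of_noroot (poly_a 0 z)) // => a.
  by apply: F_neq0; right.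
have F0y1 y : y != 0 -> F 0 y 1 = F 0 y 0.
  move=> y_neq0; apply: (poly_fun_const_of_noroot (poly_z 0 y)) => z.
  by apply: F_neq0; left.
have F001 : F 0 0 1 = 0.
  rewrite -[RHS]F000.
  by apply: (poly_fun_eq_at0 (poly_y 0 1) (poly_y 0 0)); apply: F0y1.
have [_ /eqP] : (0 : R) = 0 /\ (1 : R) = 0 by apply/zeroF; exists 0.
by rewrite oner_eq0.
Qed.

End NoPolynomialProjection.

Arguments origin_not_projection_of_poly_zeros {R F}.

Theorem corollary6p4 :
  ~ (exists p : {mpoly C[3]},
        forall y z : C,
          (y = 0 /\ z = 0) <-> (exists a : C, p.@[pt3 a y z] = 0)).
Proof.
move=> [p zero_p].
pose F (a y z : C) := p.@[pt3 a y z].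
have poly_a y z : poly_fun (fun a => F a y z).
  by apply: (poly_fun_meval_line _ (0 : 'I_3)) => x [[|[|[|]]] ?].
have poly_y a z : poly_fun (fun y => F a y z).
  by apply: (poly_fun_meval_line _ (1 : 'I_3)) => x [[|[|[|]]] ?].
have poly_z a y : poly_fun (fun z => F a y z).
  by apply: (poly_fun_meval_line _ (2 : 'I_3)) => x [[|[|[|]]] ?].
exact: (origin_not_projection_of_poly_zeros poly_a poly_y poly_z zero_p).
Qed.
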